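(* Let $n,m\in\mathbb{N}$ and suppose: (A1) $X_1,\ldots,X_n,Y_1,\ldots,Y_m$ are GTAI; $\Theta_1,\ldots,\Theta_n,\Delta_1,\ldots,\Delta_m$ are non-negative, non-degenerate at zero, arbitrarily dependent random variables with distributions whose supports are bounded from above, and $(\Theta_1,\ldots,\Theta_n,\Delta_1,\ldots,\Delta_m)$ is independent of $(X_1,\ldots,X_n,Y_1,\ldots,Y_m)$; (A2) $X_i$ has distribution $F_i\in\mathcal{D}\cap\mathcal{L}$ and $Y_j$ has distribution $G_j\in\mathcal{D}\cap\mathcal{L}$ for all $i,j$; for each $i\le n\wedge m$ the pair $(X_i,Y_i)$ is SAI with some constant $C_i>0$; and $X_i$, $Y_j$ are independent whenever $i\neq j$. Let $a:[0,\infty)\to(0,\infty)$ satisfy $a(x)\to\infty$ and $a(x)=o(x)$ as $x\to\infty$. Then for every $1\le i\neq k\le n$ and every $j=1,\ldots,m$, $$\mathbb{P}(\Theta_iX_i>x,\;\Delta_jY_j>y,\;\Theta_k|X_k|>a(x))=o\big(\mathbb{P}(\Theta_iX_i>x,\;\Delta_jY_j>y)\big),\qquad x\wedge y\to\infty.$$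
   Context: All distributions considered have infinite right endpoint: $\overline V(x)=1-V(x)>0$ for all $x$. A distribution $V$ belongs to $\mathcal{D}$ (dominated variation) if $\limsup_{x\to\infty}\overline V(tx)/\overline V(x)<\infty$ for some (equivalently all) $t\in(0,1)$; it belongs to $\mathcal{L}$ (long tail) if $\lim_{x\to\infty}\overline V(x-a)/\overline V(x)=1$ for all $a>0$. SAI (strong asymptotic independence): real random variables $X,Y$ with distributions $F,G$ are SAI with constant $C>0$ if, as $x\wedge y\to\infty$, $\mathbb{P}(X^->x,Y>y)=O(F(-x)\overline G(y))$, $\mathbb{P}(X>x,Y^->y)=O(\overline F(x)G(-y))$ and $\mathbb{P}(X>x,Y>y)\sim C\,\overline F(x)\overline G(y)$, where $z^-=\max\{-z,0\}$. GTAI: real random variables $X_1,\ldots,X_n,Y_1,\ldots,Y_m$ with supports unbounded above are GTAI if $\lim_{x_i\wedge x_k\wedge y_j\to\infty}\mathbb{P}(|X_i|>x_i\mid X_k>x_k,Y_j>y_j)=0$ for all $1\le i\neq k\le n$, $1\le j\le m$, and $\lim_{x_i\wedge y_j\wedge y_k\to\infty}\mathbb{P}(|Y_j|>y_j\mid X_i>x_i,Y_k>y_k)=0$ for all $1\le j\neq k\le m$, $1\le i\le n$. For bivariate positive functions, $f=o(g)$ as $x\wedge y\to\infty$ means $f(x,y)/g(x,y)\to0$ as $\min\{x,y\}\to\infty$. *)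

From HB Require Import structures.
From mathcomp Require Import all_boot all_order all_algebra.
From mathcomp Require Import all_classical all_reals all_analysis.
Set Implicit Arguments. Unset Strict Implicit. Unset Printing Implicit Defensive.
Import Order.TTheory GRing.Theory Num.Theory.
Import numFieldNormedType.Exports.
Local Open Scope classical_set_scope.
Local Open Scope ring_scope.

Section Defs.
Context {d : measure_display} {T : measurableType d} {R : realType}.
Variable P : probability T R.

Definition pr (A : set T) : R := fine (P A).

Definition tailf (X : T -> R) (x : R) : R := pr [set w | x < X w].
Definition cdf (X : T -> R) (x : R) : R := pr [set w | X w <= x].

Definition inf_right_endpoint (X : T -> R) := forall x, 0 < tailf X x.

(* class D (dominated variation): limsup_{x->oo} Vbar(tx)/Vbar(x) < oo
   for some t in (0,1), i.e. the ratio is eventually bounded. *)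
Definition in_D (X : T -> R) :=
  inf_right_endpoint X /\
  exists t : R, 0 < t < 1 /\ exists K : R, exists M : R,
    forall x, M <= x -> tailf X (t * x) / tailf X x <= K.

Definition in_L (X : T -> R) :=
  inf_right_endpoint X /\
  forall a : R, 0 < a ->
    (fun x => tailf X (x - a) / tailf X x) @ +oo --> (1 : R).

Definition negpart (z : R) : R := Num.max (- z) 0.

Definition SAI (X Y : T -> R) (C : R) :=
  0 < C /\
  (exists K M : R, forall x y, M <= x -> M <= y ->
     pr [set w | x < negpart (X w) /\ y < Y w] <= K * (cdf X (- x) * tailf Y y)) /\
  (exists K M : R, forall x y, M <= x -> M <= y ->
     pr [set w | x < X w /\ y < negpart (Y w)] <= K * (tailf X x * cdf Y (- y))) /\
  (forall eps : R, 0 < eps -> exists M : R, forall x y, M <= x -> M <= y ->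
     `| pr [set w | x < X w /\ y < Y w] / (C * tailf X x * tailf Y y) - 1 | <= eps).

(* GTAI for X_1..X_n, Y_1..Y_m  (conditional probability written as ratio) *)
Definition GTAI (n m : nat) (X : 'I_n -> T -> R) (Y : 'I_m -> T -> R) :=
  (forall i x, 0 < tailf (X i) x) /\ (forall j y, 0 < tailf (Y j) y) /\
  (forall (i k : 'I_n) (j : 'I_m), i != k ->
     forall eps : R, 0 < eps -> exists M : R, forall xi xk yj,
       M <= xi -> M <= xk -> M <= yj ->
       pr [set w | xi < `|X i w| /\ xk < X k w /\ yj < Y j w]
         / pr [set w | xk < X k w /\ yj < Y j w] <= eps) /\
  (forall (j l : 'I_m) (i : 'I_n), j != l ->
     forall eps : R, 0 < eps -> exists M : R, forall yj xi yl,
       M <= yj -> M <= xi -> M <= yl ->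
       pr [set w | yj < `|Y j w| /\ xi < X i w /\ yl < Y l w]
         / pr [set w | xi < X i w /\ yl < Y l w] <= eps).

Definition indep2 (X Y : T -> R) :=
  forall A B : set R, measurable A -> measurable B ->
    P [set w | A (X w) /\ B (Y w)] = (P [set w | A (X w)] * P [set w | B (Y w)])%E.

Definition indep_vec (n m : nat) (U : 'I_n -> T -> R) (V : 'I_m -> T -> R)
    (X : 'I_n -> T -> R) (Y : 'I_m -> T -> R) :=
  forall (A C : 'I_n -> set R) (B D : 'I_m -> set R),
    (forall i, measurable (A i)) -> (forall j, measurable (B j)) ->
    (forall i, measurable (C i)) -> (forall j, measurable (D j)) ->
    P [set w | (forall i, A i (U i w)) /\ (forall j, B j (V j w)) /\
               (forall i, C i (X i w)) /\ (forall j, D j (Y j w))] =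
    (P [set w | (forall i, A i (U i w)) /\ (forall j, B j (V j w))] *
     P [set w | (forall i, C i (X i w)) /\ (forall j, D j (Y j w))])%E.

Definition good_mult (Th : T -> R) :=
  measurable_fun setT Th /\
  (forall w, 0 <= Th w) /\
  P [set w | Th w = 0] <> 1%E /\
  exists b : R, P [set w | Th w <= b] = 1%E.

End Defs.

(* The multipliers are bounded by some B almost surely, so the event
   [Theta_k |X_k| > a(x)] forces [|X_k| > a(x) / B], which by GTAI is
   negligible given [X_i > u, Y_j > v], uniformly in large u, v.  To carry this
   through the random multipliers, slice (0, B]^2 into cells
   (t^(l+1) B, t^l B] x (t^(m+1) B, t^m B]: on a cell, (Theta_i, Delta_j) is
   known up to the factor t, independence factorises the probability, and the
   dominated variation of the joint tail of (X_i, Y_j) -- from SAI or from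
   independence, together with F_i, G_j in D -- absorbs the factor t into a
   constant K.  Countable additivity over the cells then bounds the numerator
   by eps K times the denominator. *)

From HB Require Import structures.
From mathcomp Require Import all_boot all_order all_algebra.
From mathcomp Require Import all_classical all_reals all_analysis.
From mathcomp Require Import ring lra.
Import Order.TTheory GRing.Theory Num.Theory.
Import numFieldNormedType.Exports.
Local Open Scope classical_set_scope.
Local Open Scope ring_scope.

Section real_facts.
Context {R : realFieldType}.
Implicit Types a b c e p q t th x z : R.

Lemma ler_pdiv2l {x b c} : 0 < x -> 0 < b -> b <= c -> x / c <= x / b.
Proof.
by move=> x0 b0 bc; rewrite ler_pM2l // lef_pV2 // posrE (lt_le_trans b0 bc).
Qed.

Lemma lt_div_of_lt_mul {th z b x} : 0 <= th -> th <= b -> 0 < b -> 0 <= z ->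
  x < th * z -> x / b < z.
Proof.
move=> th0 thb b0 z0 h; rewrite ltr_pdivrMr //; apply: (lt_le_trans h).
by rewrite mulrC ler_wpM2l.
Qed.

Lemma lt_mul_of_lt_div {th z b x} : 0 < b -> b < th -> 0 < x -> x / b < z ->
  x < th * z.
Proof.
move=> b0 bth x0; rewrite ltr_pdivrMr // => h.
have z0 : 0 < z by rewrite -(pmulr_lgt0 _ b0); exact: lt_trans h.
by apply: (lt_trans h); rewrite mulrC ltr_pM2r.
Qed.

Lemma gt0_of_lt_mul {th z x} : 0 <= th -> 0 < x -> x < th * z -> 0 < z.
Proof.
move=> th0 x0 h; rewrite ltNge; apply/negP => z0.
by have := lt_le_trans (lt_trans x0 h) (mulr_ge0_le0 th0 z0); rewrite ltxx.
Qed.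

Lemma ler_scaled_div {t x a b} : 0 < t -> 0 < x -> 0 < a -> 0 < b -> t * b <= a ->
  t * (x / a) <= x / b.
Proof.
move=> t0 x0 a0 b0 tba.
by rewrite mulrCA ler_pM2l // ler_pdivrMr // mulrC ler_pdivlMr.
Qed.

(* The case [q = 0] holds through the convention [p / 0 = 0]. *)
Lemma ler_div_of_le_mul {e p q} : 0 <= e -> 0 <= q -> p <= e * q -> p / q <= e.
Proof.
move=> e0; rewrite le_eqVlt => /predU1P[<- _|q0 h]; first by rewrite invr0 mulr0.
by rewrite ler_pdivrMr // mulrC.
Qed.

Lemma ler_mul_of_le_div {e p q} : 0 <= q -> p <= q -> p / q <= e -> p <= e * q.
Proof.
rewrite le_eqVlt => /predU1P[<- p0 _|q0 _]; first by rewrite mulr0.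
by rewrite ler_pdivrMr // mulrC.
Qed.

Lemma ratio_near1_bounds p c : 0 < c -> `|p / c - 1| <= 2^-1 ->
  p <= 3 / 2 * c /\ c / 2 <= p.
Proof.
move=> c0; rewrite ler_norml => /andP[h1 h2].
have pE : p = (p / c) * c by rewrite divfK // gt_eqF.
set r := p / c in h1 h2 pE; rewrite pE; split.
  by rewrite ler_pM2r //; lra.
by rewrite mulrC ler_pM2r //; lra.
Qed.

End real_facts.

Section measurable_events.
Context {d : measure_display} {T : measurableType d} {R : realType}.
Implicit Types (f : T -> R) (c : R).

Lemma measurable_preimage {f} {S : set R} : measurable_fun setT f ->
  measurable S -> measurable [set w | S (f w)].
Proof. by move=> mf mS; have := mf measurableT S mS; rewrite setTI. Qed.

Lemma measurable_lt_cst {f} c : measurable_fun setT f -> measurable [set w | c < f w].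
Proof.
move=> mf; have -> : [set w | c < f w] =
    setT `&` (fun w => c < f w) @^-1` [set true].
  by apply/seteqP; split => w /=; [move=> ->|move=> [_ ->]].
exact: (measurable_realfun.measurable_fun_ltr (measurable_cst c) mf)
  measurableT [set true] I.
Qed.

Lemma measurable_le_cst {f} c : measurable_fun setT f -> measurable [set w | f w <= c].
Proof.
move=> mf; have -> : [set w | f w <= c] =
    setT `&` (fun w => f w <= c) @^-1` [set true].
  by apply/seteqP; split => w /=; [move=> ->|move=> [_ ->]].
exact: (measurable_realfun.measurable_fun_ler mf (measurable_cst c))
  measurableT [set true] I.
Qed.

Lemma measurable_lt_cst_mul {f g} c : measurable_fun setT f ->
  measurable_fun setT g -> measurable [set w | c < f w * g w].
Proof.
by move=> mf mg; apply: measurable_lt_cst; exact: measurable_realfun.measurable_funM.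
Qed.

End measurable_events.

Section pr_facts.
Context {d : measure_display} {T : measurableType d} {R : realType}.
Variable P : probability T R.
Implicit Types A B N S : set T.

Lemma prE {A} : measurable A -> P A = (pr P A)%:E.
Proof. by move=> mA; rewrite /pr fineK // fin_num_measure. Qed.

Lemma pr_ge0 A : 0 <= pr P A.
Proof. by rewrite /pr fine_ge0 // measure_ge0. Qed.

Lemma le_pr {A B} : measurable A -> measurable B -> A `<=` B -> pr P A <= pr P B.
Proof.
move=> mA mB AB; rewrite -lee_fin -!prE //.
exact: (le_measure P (mem_set mA) (mem_set mB) AB).
Qed.

Lemma le_pr_null {A B N} : measurable A -> measurable B -> measurable N ->
  P N = 0%E -> A `<=` B `|` N -> pr P A <= pr P B.
Proof.
move=> mA mB mN N0 AB.
have : (P A <= P B + P N)%E.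
  apply: le_trans (measureU2 _ mB mN).
  by apply: (le_measure P) => //; rewrite inE //; exact: measurableU.
by rewrite N0 adde0 !prE // lee_fin.
Qed.

Lemma prU {A B} : measurable A -> measurable B -> A `&` B = set0 ->
  pr P (A `|` B) = pr P A + pr P B.
Proof.
move=> mA mB AB.
have : P (A `|` B) = (P A + P B)%E by rewrite measureU.
by rewrite !prE //; [move=> [] | exact: measurableU].
Qed.

Lemma pr_mul {A B S} : measurable A -> measurable B -> measurable S ->
  P S = (P A * P B)%E -> pr P S = pr P A * pr P B.
Proof. by move=> mA mB mS; rewrite (prE mA) (prE mB) (prE mS) => -[]. Qed.

Lemma measure_gt_bound_null {f : T -> R} {b c : R} : measurable_fun setT f ->
  P [set w | f w <= b] = 1%E -> b <= c -> P [set w | c < f w] = 0%E.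
Proof.
move=> mf fb bc.
have splitT : [set w | f w <= b] `|` [set w | b < f w] = setT.
  by apply/seteqP; split => w //= _; case: (leP (f w) b) => hw; [left|right].
have disj : [set w | f w <= b] `&` [set w | b < f w] = set0.
  apply/seteqP; split => w //= [h1 h2].
  by have := le_lt_trans h1 h2; rewrite ltxx.
have gtb0 : pr P [set w | b < f w] = 0.
  have := prU (measurable_le_cst b mf) (measurable_lt_cst b mf) disj.
  by rewrite splitT {1}/pr probability_setT {1}/pr fb /=; lra.
rewrite (prE (measurable_lt_cst c mf)); congr (_%:E).
apply/eqP; rewrite eq_le pr_ge0 andbT -gtb0.
apply: le_pr; [exact: measurable_lt_cst|exact: measurable_lt_cst|].
by move=> w /=; apply: le_lt_trans.
Qed.

End pr_facts.

Section dominated_tails.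
Context {d : measure_display} {T : measurableType d} {R : realType}.
Variable P : probability T R.
Implicit Types X Y : T -> R.

Lemma le_tailf {X u v} : measurable_fun setT X -> u <= v -> tailf P X v <= tailf P X u.
Proof.
move=> mX uv; apply: le_pr; [exact: measurable_lt_cst|exact: measurable_lt_cst|].
by move=> w /=; apply: le_lt_trans.
Qed.

Lemma in_D_uniform {X} : measurable_fun setT X -> in_D P X ->
  exists t0 K M, 0 < t0 < 1 /\ 0 <= K /\
    forall t u, t0 <= t -> M <= u -> tailf P X (t * u) <= K * tailf P X u.
Proof.
move=> mX [Xpos [t0 [t01 [K [M HK]]]]].
exists t0, `|K|, (Num.max M 0); split=> //; split=> // t u t0t.
rewrite ge_max => /andP[Mu u0].
apply: le_trans (le_tailf mX (ler_wpM2r u0 t0t)) _.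
have := HK u Mu; rewrite ler_pdivrMr // => h; apply: le_trans h _.
by rewrite ler_wpM2r ?pr_ge0 ?ler_norm.
Qed.

Lemma in_D2_uniform {X Y} : measurable_fun setT X -> measurable_fun setT Y ->
  in_D P X -> in_D P Y ->
  exists t K M, 0 < t < 1 /\ 0 <= K /\ forall u, M <= u ->
    tailf P X (t * u) <= K * tailf P X u /\ tailf P Y (t * u) <= K * tailf P Y u.
Proof.
move=> mX mY DX DY.
have [tX [KX [MX [/andP[tX0 tX1] [KX0 HX]]]]] := in_D_uniform mX DX.
have [tY [KY [MY [/andP[tY0 tY1] [KY0 HY]]]]] := in_D_uniform mY DY.
exists (Num.max tX tY), (Num.max KX KY), (Num.max MX MY).
split; first by rewrite lt_max tX0 gt_max tX1 tY1.
split; first by rewrite le_max KX0.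
move=> u; rewrite ge_max => /andP[MXu MYu]; split.
- apply: le_trans (HX _ _ _ MXu) _; first by rewrite le_max lexx.
  by rewrite ler_wpM2r ?pr_ge0 // le_max lexx.
- apply: le_trans (HY _ _ _ MYu) _; first by rewrite le_max lexx orbT.
  by rewrite ler_wpM2r ?pr_ge0 // le_max lexx orbT.
Qed.

Definition joint_tail_dominated X Y :=
  exists t K M, 0 < t < 1 /\ 0 <= K /\ forall u v, M <= u -> M <= v ->
    pr P [set w | t * u < X w /\ t * v < Y w] <= K * pr P [set w | u < X w /\ v < Y w].

Lemma indep2_joint_tail_dominated X Y : measurable_fun setT X ->
  measurable_fun setT Y -> in_D P X -> in_D P Y -> indep2 P X Y ->
  joint_tail_dominated X Y.
Proof.
move=> mX mY DX DY XY.
have [t [K [M [t01 [K0 HK]]]]] := in_D2_uniform mX mY DX DY.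
have mgt (c : R) : measurable [set z : R | c < z].
  exact: measurable_lt_cst (@measurable_id _ R setT).
have prXY u v : pr P [set w | u < X w /\ v < Y w] = tailf P X u * tailf P Y v.
  apply: (pr_mul P) (measurable_lt_cst _ mX) (measurable_lt_cst _ mY) _ _.
    by apply: measurableI; exact: measurable_lt_cst.
  exact: XY (mgt u) (mgt v).
exists t, (K * K), M; split=> //; split; first exact: mulr_ge0.
move=> u v Mu Mv; rewrite !prXY mulrACA.
have [hX _] := HK u Mu; have [_ hY] := HK v Mv.
by apply: ler_pM => //; exact: pr_ge0.
Qed.

(* SAI makes the joint tail comparable to [C Fbar(u) Gbar(v)] within a factor 2. *)
Lemma SAI_joint_tail_dominated X Y C : measurable_fun setT X ->
  measurable_fun setT Y -> in_D P X -> in_D P Y -> SAI P X Y C ->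
  joint_tail_dominated X Y.
Proof.
move=> mX mY DX DY [C0 [_ [_ HS]]].
have [t [K [M [/andP[t0 t1] [K0 HK]]]]] := in_D2_uniform mX mY DX DY.
have [MS HMS] := HS 2^-1 ltac:(by rewrite invr_gt0).
pose c u v := C * tailf P X u * tailf P Y v.
have near_c u v : MS <= u -> MS <= v ->
    pr P [set w | u < X w /\ v < Y w] <= 3 / 2 * c u v /\
    c u v / 2 <= pr P [set w | u < X w /\ v < Y w].
  move=> uM vM; apply: ratio_near1_bounds; last exact: HMS.
  by rewrite !mulr_gt0 //; [case: DX|case: DY].
exists t, (3 * (K * K)), (Num.max M (Num.max (MS / t) 0)).
split; first by rewrite t0 t1.
split; first by rewrite !mulr_ge0.
move=> u v; rewrite !ge_max => /andP[Mu /andP[Su u0]] /andP[Mv /andP[Sv v0]].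
have tuS : MS <= t * u by rewrite mulrC -ler_pdivrMr.
have tvS : MS <= t * v by rewrite mulrC -ler_pdivrMr.
have uS : MS <= u by apply: le_trans tuS _; rewrite ler_piMl // ltW.
have vS : MS <= v by apply: le_trans tvS _; rewrite ler_piMl // ltW.
have [hX _] := HK u Mu; have [_ hY] := HK v Mv.
apply: le_trans (near_c _ _ tuS tvS).1 _.
apply: le_trans (_ : 3 / 2 * (C * (K * tailf P X u) * (K * tailf P Y v)) <= _).
  rewrite ler_pM2l // /c; apply: ler_pM; rewrite ?pr_ge0 //.
    by rewrite mulr_ge0 ?pr_ge0 // ltW.
  by rewrite ler_pM2l.
apply: le_trans (_ : 3 * (K * K) * (c u v / 2) <= _); last first.
  by rewrite ler_wpM2l ?(near_c _ _ uS vS).2 // !mulr_ge0.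
by rewrite /c le_eqVlt; apply/orP; left; apply/eqP; field.
Qed.

End dominated_tails.

Section scaled_tails.
Context {d : measure_display} {T : measurableType d} {R : realType}.
Variable P : probability T R.
Variables (Ti Dj Xi Yj Xk : T -> R).
Hypotheses (mTi : measurable_fun setT Ti) (mDj : measurable_fun setT Dj)
  (mXi : measurable_fun setT Xi) (mYj : measurable_fun setT Yj)
  (mXk : measurable_fun setT Xk).
Hypotheses (Ti_ge0 : forall w, 0 <= Ti w) (Dj_ge0 : forall w, 0 <= Dj w).
Variable B : R.
Hypothesis B_gt0 : 0 < B.
Hypotheses (Ti_le : P [set w | B < Ti w] = 0%E) (Dj_le : P [set w | B < Dj w] = 0%E).
Hypothesis indep : forall I J A C Z : set R, measurable I -> measurable J ->
  measurable A -> measurable C -> measurable Z ->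
  pr P [set w | (I (Ti w) /\ J (Dj w)) /\ A (Xi w) /\ C (Yj w) /\ Z (Xk w)] =
  pr P [set w | I (Ti w) /\ J (Dj w)] *
  pr P [set w | A (Xi w) /\ C (Yj w) /\ Z (Xk w)].

Let cell a b c f := [set w | (a < Ti w /\ Ti w <= b) /\ (c < Dj w /\ Dj w <= f)].
Let tails u v (Z : set R) := [set w | u < Xi w /\ v < Yj w /\ Z (Xk w)].

Let measurable_itv_oc (a b : R) : measurable [set z : R | a < z /\ z <= b].
Proof.
have mid := @measurable_id _ R setT.
by apply: measurableI; [exact: measurable_lt_cst mid|exact: measurable_le_cst mid].
Qed.

Let measurable_cell a b c f : measurable (cell a b c f).
Proof.
by apply: measurableI; apply: measurable_preimage (measurable_itv_oc _ _).
Qed.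

Let measurable_tails u v Z : measurable Z -> measurable (tails u v Z).
Proof.
move=> mZ; apply: measurableI; first exact: measurable_lt_cst.
by apply: measurableI; [exact: measurable_lt_cst|exact: measurable_preimage].
Qed.

Let pr_cell_tails a b c f u v Z : measurable Z ->
  pr P (cell a b c f `&` tails u v Z) = pr P (cell a b c f) * pr P (tails u v Z).
Proof.
have mgt (r : R) : measurable [set z : R | r < z].
  exact: measurable_lt_cst (@measurable_id _ R setT).
by move=> mZ; exact: indep (measurable_itv_oc a b) (measurable_itv_oc c f)
  (mgt u) (mgt v) mZ.
Qed.

Let tails_setT u v : tails u v setT = [set w | u < Xi w /\ v < Yj w].
Proof. by apply/seteqP; split => w /=; [move=> [? []]|move=> [? ?]]. Qed.

Let measurable_normXk := measurableT_comp (@measurable_realfun.normr_measurable R setT) mXk.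

Section cells.
Variables (e K t M : R).
Hypotheses (e_ge0 : 0 <= e) (K_ge0 : 0 <= K) (t_gt0 : 0 < t) (t_lt1 : t < 1).
Hypothesis negligible : forall s u v, M <= s -> M <= u -> M <= v ->
  pr P [set w | u < Xi w /\ v < Yj w /\ s < `|Xk w|] <=
  e * pr P [set w | u < Xi w /\ v < Yj w].
Hypothesis dominated : forall u v, M <= u -> M <= v ->
  pr P [set w | t * u < Xi w /\ t * v < Yj w] <=
  K * pr P [set w | u < Xi w /\ v < Yj w].
Variables (x y s : R).
Hypotheses (x_gt0 : 0 < x) (y_gt0 : 0 < y) (Mx : M <= x / B) (My : M <= y / B)
  (Ms : M <= s).

Let N := [set w | x < Ti w * Xi w /\ y < Dj w * Yj w /\ s < `|Xk w|].
Let D := [set w | x < Ti w * Xi w /\ y < Dj w * Yj w].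

Let measurable_N : measurable N.
Proof.
apply: measurableI; first exact: measurable_lt_cst_mul.
by apply: measurableI; [exact: measurable_lt_cst_mul|exact: measurable_lt_cst].
Qed.

Let measurable_D : measurable D.
Proof. by apply: measurableI; exact: measurable_lt_cst_mul. Qed.

Let bounded_on S := pr P (N `&` S) <= e * K * pr P (D `&` S).

Let bounded_on_cell a b c f : 0 < a -> a <= b -> b <= B -> t * b <= a ->
  0 < c -> c <= f -> f <= B -> t * f <= c -> bounded_on (cell a b c f).
Proof.
move=> a0 ab bB tba c0 cf fB tfc.
have b0 : 0 < b := lt_le_trans a0 ab.
have f0 : 0 < f := lt_le_trans c0 cf.
have mcell := measurable_cell a b c f.
have mZ : measurable [set z : R | s < `|z|].
  exact: measurable_lt_cst (@measurable_realfun.normr_measurable R setT).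
have N_cell : pr P (N `&` cell a b c f) <=
    pr P (cell a b c f `&` tails (x / b) (y / f) [set z | s < `|z|]).
  apply: le_pr; first exact: measurableI.
    exact: measurableI mcell (measurable_tails _ _ _ mZ).
  move=> w [[hx [hy hs]] [[ha hb] [hc hf]]]; split; first by split.
  split; first exact: lt_div_of_lt_mul (Ti_ge0 w) hb b0
    (ltW (gt0_of_lt_mul (Ti_ge0 w) x_gt0 hx)) hx.
  split=> //; exact: lt_div_of_lt_mul (Dj_ge0 w) hf f0
    (ltW (gt0_of_lt_mul (Dj_ge0 w) y_gt0 hy)) hy.
have shrink : pr P (tails (x / b) (y / f) [set z | s < `|z|]) <=
    e * pr P [set w | x / b < Xi w /\ y / f < Yj w].
  apply: negligible => //.
    exact: le_trans Mx (ler_pdiv2l x_gt0 b0 bB).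
  exact: le_trans My (ler_pdiv2l y_gt0 f0 fB).
have rescale : pr P [set w | x / b < Xi w /\ y / f < Yj w] <=
    K * pr P [set w | x / a < Xi w /\ y / c < Yj w].
  have Mxa : M <= x / a.
    exact: le_trans Mx (le_trans (ler_pdiv2l x_gt0 b0 bB) (ler_pdiv2l x_gt0 a0 ab)).
  have Myc : M <= y / c.
    exact: le_trans My (le_trans (ler_pdiv2l y_gt0 f0 fB) (ler_pdiv2l y_gt0 c0 cf)).
  apply: le_trans (dominated _ _ Mxa Myc); apply: le_pr;
    try by apply: measurableI; exact: measurable_lt_cst.
  move=> w [hx hy]; split.
    exact: le_lt_trans (ler_scaled_div t_gt0 x_gt0 a0 b0 tba) hx.
  exact: le_lt_trans (ler_scaled_div t_gt0 y_gt0 c0 f0 tfc) hy.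
have D_cell : pr P (cell a b c f `&` tails (x / a) (y / c) setT) <=
    pr P (D `&` cell a b c f).
  apply: le_pr; first exact: measurableI mcell (measurable_tails _ _ _ measurableT).
    exact: measurableI.
  move=> w [[[ha hb] [hc hf]] [hx [hy _]]]; split=> //; split.
    exact: lt_mul_of_lt_div a0 ha x_gt0 hx.
  exact: lt_mul_of_lt_div c0 hc y_gt0 hy.
rewrite pr_cell_tails // tails_setT in D_cell.
apply: le_trans N_cell _; rewrite pr_cell_tails //.
apply: le_trans (_ : pr P (cell a b c f) *
    (e * (K * pr P [set w | x / a < Xi w /\ y / c < Yj w])) <= _).
  rewrite ler_wpM2l ?pr_ge0 //; apply: le_trans shrink _.
  by rewrite ler_wpM2l.
set pc := pr P (cell a b c f); set q := pr P [set w | x / a < Xi w /\ y / c < Yj w].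
have -> : pc * (e * (K * q)) = e * K * (pc * q) by ring.
by rewrite ler_wpM2l ?mulr_ge0.
Qed.

Let bounded_onU S1 S2 : measurable S1 -> measurable S2 -> S1 `&` S2 = set0 ->
  bounded_on S1 -> bounded_on S2 -> bounded_on (S1 `|` S2).
Proof.
move=> mS1 mS2 S12 h1 h2; rewrite /bounded_on !setIUr.
have disj (Z : set T) : (Z `&` S1) `&` (Z `&` S2) = set0.
  by rewrite setIACA S12 setI0.
by rewrite !prU ?disj //; try exact: measurableI; rewrite mulrDr lerD.
Qed.

Let bounded_on0 : bounded_on set0.
Proof. by rewrite /bounded_on !setI0 /pr measure0 /= mulr0. Qed.

Let cell_splitl {a m b} c f : a <= m -> m <= b ->
  cell a b c f = cell a m c f `|` cell m b c f /\ cell a m c f `&` cell m b c f = set0.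
Proof.
move=> am mb; split; apply/seteqP; split => w //=.
- by move=> [[ha hb] hc]; case: (leP (Ti w) m) => hm; [left|right].
- move=> [[[ha hm] hc]|[[hm hb] hc]]; split=> //; split=> //.
    exact: le_trans hm mb.
  exact: le_lt_trans am hm.
- by move=> [[[_ hm] _] [[hm' _] _]]; have := le_lt_trans hm hm'; rewrite ltxx.
Qed.

Let cell_splitr {c m f} a b : c <= m -> m <= f ->
  cell a b c f = cell a b c m `|` cell a b m f /\ cell a b c m `&` cell a b m f = set0.
Proof.
move=> cm mf; split; apply/seteqP; split => w //=.
- by move=> [ha [hc hf]]; case: (leP (Dj w) m) => hm; [left|right].
- move=> [[ha [hc hm]]|[ha [hm hf]]]; split=> //; split=> //.
    exact: le_trans hm mf.
  exact: le_lt_trans cm hm.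
- by move=> [[_ [_ hm]] [_ [hm' _]]]; have := le_lt_trans hm hm'; rewrite ltxx.
Qed.

Let grid l := B * t ^+ l.

Let grid_gt0 l : 0 < grid l.
Proof. by rewrite mulr_gt0 // exprn_gt0. Qed.

Let gridS l : grid l.+1 = t * grid l.
Proof. by rewrite /grid exprS mulrCA. Qed.

Let grid_leB l : grid l <= B.
Proof. by apply: ler_piMr; [exact: ltW|exact: exprn_ile1 (ltW t_gt0) (ltW t_lt1)]. Qed.

Let le_gridS l : grid l.+1 <= grid l.
Proof. by rewrite gridS; apply: ler_piMl; [exact: ltW|exact: ltW]. Qed.

Let grid_noninc : {homo grid : l l' / (l <= l')%N >-> l' <= l}.
Proof.
move=> l l'; elim: l' => [|l' IH]; first by rewrite leqn0 => /eqP ->.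
rewrite leq_eqVlt => /orP[/eqP -> //|]; rewrite ltnS => /IH.
exact: le_trans (le_gridS l').
Qed.

Let bounded_on_strip L l : bounded_on (cell (grid L) B (grid l.+1) (grid l)).
Proof.
elim: L => [|L IH].
  rewrite /grid expr0 mulr1; have -> : cell B B (grid l.+1) (grid l) = set0.
    by apply/seteqP; split => w //= [[h1 h2] _]; have := lt_le_trans h1 h2; rewrite ltxx.
  exact: bounded_on0.
have [-> disj] := cell_splitl (grid l.+1) (grid l) (le_gridS L) (grid_leB L).
apply: bounded_onU disj _ IH => //.
by apply: bounded_on_cell;
  [exact: grid_gt0|exact: le_gridS|exact: grid_leB|rewrite gridS
  |exact: grid_gt0|exact: le_gridS|exact: grid_leB|rewrite gridS].
Qed.

Let bounded_on_square L l : bounded_on (cell (grid L) B (grid l) B).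
Proof.
elim: l => [|l IH].
  rewrite /grid expr0 mulr1; have -> : cell (B * t ^+ L) B B B = set0.
    by apply/seteqP; split => w //= [_ [h1 h2]]; have := lt_le_trans h1 h2; rewrite ltxx.
  exact: bounded_on0.
have [-> disj] := cell_splitr (grid L) B (le_gridS l) (grid_leB l).
exact: bounded_onU disj (bounded_on_strip L l) IH.
Qed.

Let in_square {w} : N w -> Ti w <= B -> Dj w <= B ->
  exists L, cell (grid L) B (grid L) B w.
Proof.
move=> [hx [hy _]] TiB DjB.
have Xi0 := gt0_of_lt_mul (Ti_ge0 w) x_gt0 hx.
have Yj0 := gt0_of_lt_mul (Dj_ge0 w) y_gt0 hy.
have Ti0 : 0 < Ti w by apply: gt0_of_lt_mul (ltW Xi0) x_gt0 _; rewrite mulrC.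
have Dj0 : 0 < Dj w by apply: gt0_of_lt_mul (ltW Yj0) y_gt0 _; rewrite mulrC.
have [L grid_lt] : exists L, grid L < Num.min (Ti w) (Dj w).
  have m0 : 0 < Num.min (Ti w) (Dj w) / B by rewrite divr_gt0 // lt_min Ti0.
  have := @cvg_expr R t; rewrite ger0_norm ?ltW // => /(_ t_lt1).
  move/cvgrPdist_lt/(_ _ m0) => [L _ HL]; exists L.
  have := HL L (leqnn L); rewrite sub0r normrN ger0_norm ?exprn_ge0 ?ltW // => hL.
  by rewrite /grid mulrC -ltr_pdivlMr.
rewrite lt_min in grid_lt; case/andP: grid_lt => hTi hDj.
by exists L; split; split.
Qed.

Lemma pr_scaled_tails_le :
  pr P [set w | x < Ti w * Xi w /\ y < Dj w * Yj w /\ s < `|Xk w|] <=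
  e * K * pr P [set w | x < Ti w * Xi w /\ y < Dj w * Yj w].
Proof.
pose F L := N `&` cell (grid L) B (grid L) B.
have mF L : measurable (F L) by exact: measurableI measurable_N (measurable_cell _ _ _ _).
have F_bounded L : (P (F L) <= (e * K * pr P D)%:E)%E.
  rewrite (prE P (mF L)) lee_fin; apply: le_trans (bounded_on_square L L) _.
  rewrite ler_wpM2l ?mulr_ge0 //; apply: le_pr; last exact: subIsetl.
    exact: measurableI measurable_D (measurable_cell _ _ _ _).
  exact: measurable_D.
have F_nondecr : {homo F : l l' / (l <= l')%N >-> (l <= l')%O}.
  move=> l l' ll'; apply/subsetPset => w [Nw [[h1 h2] [h3 h4]]].
  by split=> //; split; split=> //; exact: le_lt_trans (grid_noninc _ _ ll') _.
have mUF := bigcupT_measurable F mF.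
have UF_bounded : (P (\bigcup_L F L) <= (e * K * pr P D)%:E)%E.
  have cvgF := @nondecreasing_cvg_mu _ _ _ P F mF mUF F_nondecr.
  rewrite -(cvg_lim _ cvgF) //; apply: lime_le; last exact: nearW.
  by apply/cvg_ex; eexists; exact: cvgF.
rewrite (prE P mUF) lee_fin in UF_bounded; apply: le_trans UF_bounded.
have mnull : measurable ([set w | B < Ti w] `|` [set w | B < Dj w]).
  by apply: measurableU; exact: measurable_lt_cst.
apply: (le_pr_null P measurable_N mUF mnull).
  apply/eqP; rewrite eq_le measure_ge0 andbT.
  apply: le_trans (measureU2 P (measurable_lt_cst B mTi) (measurable_lt_cst B mDj)) _.
  change (P [set w | (B < Ti w)%R] + P [set w | (B < Dj w)%R] <= 0)%E.
  by rewrite Ti_le Dj_le adde0.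
move=> w Nw; case: (leP (Ti w) B) => TiB; last by right; left.
case: (leP (Dj w) B) => DjB; last by right; right.
by have [L ?] := in_square Nw TiB DjB; left; exists L.
Qed.

End cells.

Lemma scaled_tails_ratio_small (Tk : T -> R) (a : R -> R) :
  measurable_fun setT Tk -> (forall w, 0 <= Tk w) -> P [set w | B < Tk w] = 0%E ->
  (forall e, 0 < e -> exists M, forall s u v, M <= s -> M <= u -> M <= v ->
     pr P [set w | u < Xi w /\ v < Yj w /\ s < `|Xk w|] <=
     e * pr P [set w | u < Xi w /\ v < Yj w]) ->
  joint_tail_dominated P Xi Yj ->
  a x @[x --> +oo] --> +oo ->
  forall eps, 0 < eps -> exists M, forall x y, M <= x -> M <= y ->
    pr P [set w | x < Ti w * Xi w /\ y < Dj w * Yj w /\ a x < Tk w * `|Xk w|]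
    / pr P [set w | x < Ti w * Xi w /\ y < Dj w * Yj w] <= eps.
Proof.
move=> mTk Tk_ge0 Tk_le negl [t [K [M2 [/andP[t0 t1] [K0 dom]]]]] a_oo eps eps0.
pose e := eps / (K + 1).
have K1 : 0 < K + 1 by rewrite ltr_wpDl.
have e0 : 0 < e by rewrite divr_gt0.
have eK : e * K <= eps by rewrite /e mulrAC ler_pdivrMr // ler_pM2l //; lra.
have [M0 negl_e] := negl e e0.
pose M := Num.max M0 M2.
have negl_M s u v : M <= s -> M <= u -> M <= v ->
    pr P [set w | u < Xi w /\ v < Yj w /\ s < `|Xk w|] <=
    e * pr P [set w | u < Xi w /\ v < Yj w].
  by rewrite !ge_max => /andP[? _] /andP[? _] /andP[? _]; exact: negl_e.
have dom_M u v : M <= u -> M <= v ->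
    pr P [set w | t * u < Xi w /\ t * v < Yj w] <=
    K * pr P [set w | u < Xi w /\ v < Yj w].
  by rewrite !ge_max => /andP[_ ?] /andP[_ ?]; exact: dom.
have [Ma a_gt] : exists Ma, forall x, Ma < x -> B * M < a x.
  by have [Ma [_ HMa]] := (cvgryPgt _).1 a_oo (B * M); exists Ma.
exists (Num.max (Ma + 1) (Num.max (B * M) B)) => x y.
rewrite !ge_max => /andP[xa /andP[xM xB]] /andP[_ /andP[yM yB]].
have x0 := lt_le_trans B_gt0 xB; have y0 := lt_le_trans B_gt0 yB.
have divB z : B * M <= z -> M <= z / B by rewrite ler_pdivlMr // mulrC.
have Ms : M <= a x / B.
  by apply/divB/ltW/a_gt; apply: lt_le_trans xa; rewrite ltrDl.
apply: ler_div_of_le_mul (ltW eps0) (pr_ge0 P _) _.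
apply: le_trans (_ : pr P [set w | x < Ti w * Xi w /\ y < Dj w * Yj w /\
  a x / B < `|Xk w|] <= _).
  apply: (le_pr_null P _ _ (measurable_lt_cst B mTk) Tk_le).
  - apply: measurableI; first exact: measurable_lt_cst_mul.
    apply: measurableI; first exact: measurable_lt_cst_mul.
    exact: measurable_lt_cst_mul mTk measurable_normXk.
  - apply: measurableI; first exact: measurable_lt_cst_mul.
    apply: measurableI; first exact: measurable_lt_cst_mul.
    exact: measurable_lt_cst _ measurable_normXk.
  move=> w [hx [hy hk]]; case: (leP (Tk w) B) => TkB; [left|right] => //.
  by split=> //; split=> //; exact: lt_div_of_lt_mul (Tk_ge0 w) TkB B_gt0 (normr_ge0 _) hk.
apply: le_trans (pr_scaled_tails_le e K t M (ltW e0) K0 t0 t1 negl_M dom_M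
  x y (a x / B) x0 y0 (divB _ xM) (divB _ yM) Ms) _.
by rewrite ler_wpM2r ?pr_ge0.
Qed.

End scaled_tails.

Definition only_at {I : eqType} {U : Type} (i : I) (S : set U) (l : I) : set U :=
  if l == i then S else setT.

Lemma only_atP {I : eqType} {U : Type} (i : I) (S : set U) (f : I -> U) :
  (forall l, only_at i S l (f l)) <-> S (f i).
Proof.
split; first by move/(_ i); rewrite /only_at eqxx.
by move=> Sfi l; rewrite /only_at; case: eqP => [->|].
Qed.

Lemma only_atIP {I : eqType} {U : Type} (i k : I) (S S' : set U) (f : I -> U) :
  (forall l, (only_at i S l `&` only_at k S' l) (f l)) <-> S (f i) /\ S' (f k).
Proof.
split=> [h|[/(only_atP i S f) h1 /(only_atP k S' f) h2] l]; last by split.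
by split; apply/(only_atP _ _ f) => l; case: (h l).
Qed.

Lemma measurable_only_at {R : realType} {I : eqType} {i : I} {S : set R} {l : I} :
  measurable S -> measurable (only_at i S l).
Proof. by move=> mS; rewrite /only_at; case: eqP. Qed.

Section coordinates.
Context {d : measure_display} {T : measurableType d} {R : realType}.
Variable P : probability T R.
Context {n m : nat} {X : 'I_n -> T -> R} {Y : 'I_m -> T -> R}.
Hypotheses (mX : forall i, measurable_fun setT (X i))
  (mY : forall j, measurable_fun setT (Y j)).

Lemma indep_vec_pick {U : 'I_n -> T -> R} {V : 'I_m -> T -> R} {i k j} :
  indep_vec P U V X Y -> measurable_fun setT (U i) -> measurable_fun setT (V j) ->
  forall I J A C Z : set R, measurable I -> measurable J ->
  measurable A -> measurable C -> measurable Z ->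
  pr P [set w | (I (U i w) /\ J (V j w)) /\ A (X i w) /\ C (Y j w) /\ Z (X k w)] =
  pr P [set w | I (U i w) /\ J (V j w)] *
  pr P [set w | A (X i w) /\ C (Y j w) /\ Z (X k w)].
Proof.
move=> ind mU mV I J A C Z mI mJ mA mC mZ.
have := ind (only_at i I) (fun l => only_at i A l `&` only_at k Z l) (only_at j J)
  (only_at j C) (fun=> measurable_only_at mI) (fun=> measurable_only_at mJ)
  (fun=> measurableI _ _ (measurable_only_at mA) (measurable_only_at mZ))
  (fun=> measurable_only_at mC).
have E_UV : [set w | (forall l, only_at i I l (U l w)) /\
                      (forall l, only_at j J l (V l w))] =
            [set w | I (U i w) /\ J (V j w)].
  apply/seteqP; split=> w /=.
    by move=> [/(only_atP _ _ (U^~ w)) ? /(only_atP _ _ (V^~ w)) ?].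
  move=> [hI hJ].
  by split; [exact: (only_atP _ _ (U^~ w)).2|exact: (only_atP _ _ (V^~ w)).2].
have E_XY : [set w | (forall l, (only_at i A l `&` only_at k Z l) (X l w)) /\
                      (forall l, only_at j C l (Y l w))] =
            [set w | A (X i w) /\ C (Y j w) /\ Z (X k w)].
  apply/seteqP; split=> w /=.
    by move=> [/(only_atIP _ _ _ _ (X^~ w)) [? ?] /(only_atP _ _ (Y^~ w)) ?].
  move=> [hA [hC hZ]]; split; first exact: (only_atIP _ _ _ _ (X^~ w)).2.
  exact: (only_atP _ _ (Y^~ w)).2.
have E_all : [set w | (forall l, only_at i I l (U l w)) /\
    (forall l, only_at j J l (V l w)) /\
    (forall l, (only_at i A l `&` only_at k Z l) (X l w)) /\
    (forall l, only_at j C l (Y l w))] =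
  [set w | (I (U i w) /\ J (V j w)) /\ A (X i w) /\ C (Y j w) /\ Z (X k w)].
  apply/seteqP; split=> w /=.
    move=> [/(only_atP _ _ (U^~ w)) ? [/(only_atP _ _ (V^~ w)) ?]].
    by move=> [/(only_atIP _ _ _ _ (X^~ w)) [? ?] /(only_atP _ _ (Y^~ w)) ?].
  move=> [[hI hJ] [hA [hC hZ]]].
  split; first exact: (only_atP _ _ (U^~ w)).2.
  split; first exact: (only_atP _ _ (V^~ w)).2.
  split; first exact: (only_atIP _ _ _ _ (X^~ w)).2.
  exact: (only_atP _ _ (Y^~ w)).2.
rewrite E_UV E_XY E_all; apply: pr_mul.
- by apply: measurableI; apply: measurable_preimage.
- apply: measurableI; first exact: measurable_preimage.
  by apply: measurableI; apply: measurable_preimage.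
- apply: measurableI; first by apply: measurableI; apply: measurable_preimage.
  apply: measurableI; first exact: measurable_preimage.
  by apply: measurableI; apply: measurable_preimage.
Qed.

Lemma GTAI_negligible {i k j} : GTAI P X Y -> i != k ->
  forall e, 0 < e -> exists M, forall s u v, M <= s -> M <= u -> M <= v ->
    pr P [set w | u < X i w /\ v < Y j w /\ s < `|X k w|] <=
    e * pr P [set w | u < X i w /\ v < Y j w].
Proof.
move=> [_ [_ [cond _]]] ik e e0.
have [M HM] := cond k i j ltac:(by rewrite eq_sym) e e0.
exists M => s u v Ms Mu Mv.
have measurable_normXk := measurableT_comp (@measurable_realfun.normr_measurable R setT) (mX k).
apply: ler_mul_of_le_div (pr_ge0 P _) _ _.
  apply: le_pr; last by move=> w [? []].
    apply: measurableI; first exact: measurable_lt_cst.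
    by apply: measurableI; exact: measurable_lt_cst.
  by apply: measurableI; exact: measurable_lt_cst.
have -> : [set w | u < X i w /\ v < Y j w /\ s < `|X k w|] =
    [set w | s < `|X k w| /\ u < X i w /\ v < Y j w].
  by apply/seteqP; split=> w /= [? []].
exact: HM.
Qed.

End coordinates.

Lemma good_mult_bounded {d : measure_display} {T : measurableType d} {R : realType}
  (P : probability T R) {Th : T -> R} :
  good_mult P Th -> exists b, forall c, b <= c -> P [set w | c < Th w] = 0%E.
Proof. by move=> [mTh [_ [_ [b Thb]]]]; exists b => c; exact: measure_gt_bound_null. Qed.


Theorem lemma2p2 (d : measure_display) (T : measurableType d) (R : realType)
  (P : probability T R) (n m : nat)
  (X : 'I_n -> T -> R) (Y : 'I_m -> T -> R)
  (Theta : 'I_n -> T -> R) (Delta : 'I_m -> T -> R) (a : R -> R) :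
  (forall i, measurable_fun setT (X i)) ->
  (forall j, measurable_fun setT (Y j)) ->
  (* A1 *)
  GTAI P X Y ->
  (forall i, good_mult P (Theta i)) ->
  (forall j, good_mult P (Delta j)) ->
  indep_vec P Theta Delta X Y ->
  (* A2 *)
  (forall i, in_D P (X i) /\ in_L P (X i)) ->
  (forall j, in_D P (Y j) /\ in_L P (Y j)) ->
  (forall (i : 'I_n) (j : 'I_m), val i = val j ->
     exists C : R, SAI P (X i) (Y j) C) ->
  (forall (i : 'I_n) (j : 'I_m), val i <> val j -> indep2 P (X i) (Y j)) ->
  (forall x, 0 <= x -> 0 < a x) ->
  a x @[x --> +oo] --> +oo ->
  (fun x => a x / x) @ +oo --> (0 : R) ->
  forall (i k : 'I_n) (j : 'I_m), i != k ->
  forall eps : R, 0 < eps -> exists M : R, forall x y, M <= x -> M <= y ->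
    pr P [set w | x < Theta i w * X i w /\ y < Delta j w * Y j w /\
                  a x < Theta k w * `|X k w|]
    / pr P [set w | x < Theta i w * X i w /\ y < Delta j w * Y j w] <= eps.
Proof.
move=> mX mY gtai gTheta gDelta indep DLX DLY sai indep_ij _ a_oo _ i k j ik.
have [mTi [Ti_ge0 _]] := gTheta i; have [bi Ti_le] := good_mult_bounded P (gTheta i).
have [mDj [Dj_ge0 _]] := gDelta j; have [bj Dj_le] := good_mult_bounded P (gDelta j).
have [mTk [Tk_ge0 _]] := gTheta k; have [bk Tk_le] := good_mult_bounded P (gTheta k).
pose B := Num.max 1 (Num.max bi (Num.max bj bk)).
have joint : joint_tail_dominated P (X i) (Y j).
  have [/sai [C XYC]|/eqP/indep_ij XY] := eqVneq (val i) (val j).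
    exact: SAI_joint_tail_dominated (mX i) (mY j) (DLX i).1 (DLY j).1 XYC.
  exact: indep2_joint_tail_dominated (mX i) (mY j) (DLX i).1 (DLY j).1 XY.
have B_gt0 : 0 < B by rewrite lt_max ltr01.
apply: (scaled_tails_ratio_small P _ _ _ _ _ mTi mDj (mX i) (mY j) (mX k) Ti_ge0 Dj_ge0
  B B_gt0 _ _ _ _ _ mTk Tk_ge0 _ _ joint a_oo).
- by apply: Ti_le; rewrite !le_max lexx orbT.
- by apply: Dj_le; rewrite !le_max lexx !orbT.
- exact: (indep_vec_pick P mX mY indep mTi mDj (k := k)).
- by apply: Tk_le; rewrite !le_max lexx !orbT.
- exact: (GTAI_negligible P mX mY (j := j) gtai ik).
Qed.
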